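(* Let $D,K\in\mathbb{N}$ and let $A_1,A_2,a,\varepsilon>0$ be real numbers with $a<1\leq A_1<A_2$. Let $\{d_n\}_{n\in\mathbb{N}}$ be a sequence of natural numbers and write $D_n=\prod_{i=1}^{n}d_i$. For $i=1,\ldots,K$, let $\{\alpha_{i,n}\}_{n\in\mathbb{N}}$ and $\{b_{i,n}\}_{n\in\mathbb{N}}$ be sequences of complex numbers such that: (1) $|\alpha_{1,n}|<|\alpha_{1,n+1}|$ for all $n\in\mathbb{N}$; (2) $|\alpha_{1,n}|\geq n^{1+\varepsilon}$ for all $n\in\mathbb{N}$; (3) $\liminf_{n\to\infty}|\alpha_{1,n}|^{1/(D^n\prod_{i=1}^{n-1}(KD_i+d_i))}=A_1$; (4) $\limsup_{n\to\infty}|\alpha_{1,n}|^{1/(D^n\prod_{i=1}^{n-1}(KD_i+d_i))}=A_2$; (5) for all $n\in\mathbb{N}$ and all $1<i\leq K$: $2^{-(\log_2|\alpha_{1,n}|)^a}<\frac{|\alpha_{1,n}|}{|\alpha_{i,n}|}<2^{(\log_2|\alpha_{1,n}|)^a}$; (6) for all $n\in\mathbb{N}$ and all $1\leq i\leq K$: $|b_{i,n}|\leq 2^{(\log_2|\alpha_{1,n}|)^a}$. Let $\beta_1,\ldots,\beta_K\in\mathbb{Z}$, not all $0$, and write $\gamma(N)=\sum_{j=1}^{K}\beta_j\sum_{n=N+1}^{\infty}\frac{b_{j,n}}{\alpha_{j,n}}$. Let $c\in(a,1)$. Then $$\liminf_{N\to\infty}|\gamma(N)|\left(2^{D^{cN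}\prod_{i=1}^{N-1}(KD_i+d_i)^{c}}\prod_{n=1}^{N}|\alpha_{1,n}|^{K}\right)^{DD_N}=0.$$
   Context: $\mathbb{N}=\{1,2,3,\ldots\}$; empty products equal $1$. *)

From Stdlib Require Import Reals ZArith.
From Coquelicot Require Export Coquelicot.
Open Scope R_scope.

Fixpoint prod1 (f : nat -> R) (n : nat) : R :=
  match n with O => 1 | S m => prod1 f m * f (S m) end.

Fixpoint csum1 (f : nat -> C) (K : nat) : C :=
  match K with O => RtoC 0 | S m => Cplus (csum1 f m) (f (S m)) end.

(* real power x^y for x >= 0, with the convention 0^y = 0 (used for y > 0) *)
Definition rpow (x y : R) : R := if Rle_dec x 0 then 0 else Rpower x y.

Definition log2 (x : R) : R := ln x / ln 2.

Definition Dprod (d : nat -> nat) (n : nat) : R := prod1 (fun i => INR (d i)) n.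

Definition Pprod (K : nat) (d : nat -> nat) (n : nat) : R :=
  prod1 (fun i => INR K * Dprod d i + INR (d i)) (n - 1).

Definition Eexp (D K : nat) (d : nat -> nat) (n : nat) : R :=
  INR D ^ n * Pprod K d n.

Definition ctail (f : nat -> C) (N : nat) : C :=
  (Series (fun k => Re (f (N + 1 + k)%nat)), Series (fun k => Im (f (N + 1 + k)%nat))).

Fixpoint Dnat (d : nat -> nat) (n : nat) : nat :=
  match n with O => 1%nat | S m => (Dnat d m * d (S m))%nat end.

From Stdlib Require Import Reals ZArith Lra Lia Classical ClassicalEpsilon.
From Coquelicot Require Import Coquelicot.
Open Scope R_scope.

(* Write [l n = ln |alpha_{1,n}|] and [E n = D^n prod_{i<n} (K D_i + d_i)]; by (3) and (4)
   the ratio [l n / E n] has lower and upper limits [ln A1 < ln A2], so it does not converge.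
   The weight in the statement is [exp (Phi N)] with
   [Phi N = D K D_N (l 1 + ... + l N) + D D_N X_N ln 2], [X_N] being the exponent of [2]
   there, and by (5) and (6) the [n]-th term of [gamma N] is at most [exp (2 l_n^a - l_n)].
   Hence, if [l (N+k) - 2 l(N+k)^a >= Phi N + G + (1+eps/2) ln (k+1)] for all [k >= 1], the
   weighted tail is [O (exp (-G))].  Suppose instead that for all large [N] some term [N+k]
   is "large", i.e. violates this.  Growth (2) makes [ln (k+1)] and [l (N+k)] of the order
   of [Phi N], and then [sigma N = (l 1 + ... + l N) / E N] satisfies
   [sigma (N+k) <= sigma N + O(theta^N)], and even [sigma (N+k) <= 3/4 sigma N + O(theta^N)]
   when [k >= 2], with [theta = 2^(c-1) < 1].  Following the chain of such jumps, either
   eventually [k = 1] and [sigma] converges, or [sigma] tends to [0] along the chain; in both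
   cases [l n / E n] converges, which is absurd. *)

Lemma exp_le x y : x <= y -> exp x <= exp y.
Proof. intros [Hlt | ->]; [left; apply exp_increasing |]; lra. Qed.

Lemma ln_le_sub_1 x : 0 < x -> ln x <= x - 1.
Proof. intros Hx. pose proof (exp_ineq1_le (ln x)) as Hexp. rewrite exp_ln in Hexp; lra. Qed.

Lemma ln_pos_lt x : 1 < x -> 0 < ln x.
Proof. intros Hx. rewrite <- ln_1. apply ln_increasing; lra. Qed.

Lemma ln_nonneg x : 1 <= x -> 0 <= ln x.
Proof. intros Hx. rewrite <- ln_1. apply ln_le; lra. Qed.

Lemma ln2_bounds : 0 < ln 2 < 1.
Proof.
  split; [apply ln_pos_lt; lra |].
  rewrite <- (ln_exp 1). apply ln_increasing; [lra |].
  pose proof (exp_ineq1 1). lra.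
Qed.

Lemma Rpower_pos x y : 0 < Rpower x y.
Proof. apply exp_pos. Qed.

Lemma Rpower_le_nonpos x y e : e <= 0 -> 0 < x -> x <= y -> Rpower y e <= Rpower x e.
Proof.
  intros He Hx Hxy. replace e with (- - e) by ring.
  rewrite (Rpower_Ropp x (- e)), (Rpower_Ropp y (- e)).
  apply Rinv_le_contravar; [apply Rpower_pos |]. apply Rle_Rpower_l; lra.
Qed.

Lemma Rpower_split_1 x e : 0 < x -> Rpower x e = Rpower x (e - 1) * x.
Proof.
  intros Hx. rewrite <- (Rpower_1 x) at 3 by lra. rewrite <- Rpower_plus. f_equal. ring.
Qed.

Lemma exp_neg_small C e : 0 <= C -> 0 < e -> exists G, 0 <= G /\ C * exp (- G) < e.
Proof.
  intros HC He. exists (Rmax 0 (ln ((C + 1) / e))). split; [apply Rmax_l |].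
  assert (Hq : 0 < (C + 1) / e) by (apply Rdiv_lt_0_compat; lra).
  assert (exp (- Rmax 0 (ln ((C + 1) / e))) <= e / (C + 1)).
  { replace (e / (C + 1)) with (exp (- ln ((C + 1) / e))).
    - apply exp_le. pose proof (Rmax_r 0 (ln ((C + 1) / e))). lra.
    - rewrite exp_Ropp, exp_ln by exact Hq. field. lra. }
  assert (C * (e / (C + 1)) < e).
  { replace (C * (e / (C + 1))) with (e * (C / (C + 1))) by (field; lra).
    assert (C / (C + 1) < 1).
    { apply (Rmult_lt_reg_r (C + 1)); [lra |]. unfold Rdiv. rewrite Rmult_assoc, Rinv_l by lra. lra. }
    nra. }
  pose proof (exp_pos (- Rmax 0 (ln ((C + 1) / e)))). nra.
Qed.

Lemma pow_le_pow_lt1 t m n : 0 <= t <= 1 -> (m <= n)%nat -> t ^ n <= t ^ m.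
Proof.
  intros Ht Hmn. replace n with (m + (n - m))%nat by lia. rewrite pow_add.
  pose proof (pow_le t m ltac:(lra)).
  assert (t ^ (n - m) <= 1) by (rewrite <- (pow1 (n - m)); apply pow_incr; lra). nra.
Qed.

Lemma Rpower_sublinear a eta : 0 < a < 1 -> 0 < eta ->
  exists X0, 0 <= X0 /\ forall x, 0 < x -> Rpower x a <= eta * x + X0.
Proof.
  intros Ha Heta. set (T := Rpower (/ eta) (/ (1 - a))).
  exists (Rpower T a). split; [left; apply Rpower_pos |]. intros x Hx.
  pose proof (Rpower_pos x a). pose proof (Rpower_pos T a).
  destruct (Rle_or_lt x T) as [Hle | Hlt].
  - pose proof (Rle_Rpower_l x T a ltac:(lra) ltac:(split; lra)). nra.
  - assert (HT : Rpower T (1 - a) = / eta).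
    { unfold T. rewrite Rpower_mult. replace (/ (1 - a) * (1 - a)) with 1 by (field; lra).
      apply Rpower_1, Rinv_0_lt_compat, Heta. }
    assert (Hx1 : / eta <= Rpower x (1 - a)).
    { rewrite <- HT. apply Rle_Rpower_l; [lra | split; [apply Rpower_pos | lra]]. }
    assert (Hsplit : eta * x = eta * Rpower x (1 - a) * Rpower x a).
    { rewrite Rmult_assoc, <- Rpower_plus. replace (1 - a + a) with 1 by ring. rewrite Rpower_1; lra. }
    assert (1 <= eta * Rpower x (1 - a)).
    { apply (Rmult_le_compat_l eta) in Hx1; [| lra]. rewrite Rinv_r in Hx1 by lra. exact Hx1. }
    nra.
Qed.

Lemma INR_le_pow2 k : (1 <= k)%nat -> INR k <= 2 ^ (k - 1).
Proof.
  induction k as [| k IH]; intros Hk; [lia |].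
  destruct k as [| k]; [simpl; lra |].
  specialize (IH ltac:(lia)). replace (S (S k) - 1)%nat with (S (S k - 1)) by lia.
  rewrite S_INR. change (2 ^ S (S k - 1)) with (2 * 2 ^ (S k - 1)).
  assert (1 <= INR (S k)) by (apply (le_INR 1); lia). lra.
Qed.

Lemma INR_sqr_le_pow2 k : (1 <= k)%nat -> INR k * INR k <= 3 * 2 ^ (k - 1).
Proof.
  induction k as [| k IH]; intros Hk; [lia |].
  destruct (le_lt_dec k 2) as [Hk2 | Hk2].
  - destruct k as [| [| [| k]]]; simpl; lra || lia.
  - specialize (IH ltac:(lia)). replace (S k - 1)%nat with (S (k - 1)) by lia.
    rewrite S_INR. simpl pow.
    assert (3 <= INR k) by (replace 3 with (INR 3) by (simpl; ring); apply le_INR; lia). nra.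
Qed.

Lemma affine_le_sqr_pow2 r k : 1 <= r -> (2 <= k)%nat ->
  1 + INR k * r <= 3 / 4 * ((1 + r) * (1 + r)) * 2 ^ (k - 2).
Proof.
  intros Hr Hk. induction k as [| k IH]; [lia |].
  destruct (Nat.eq_dec k 1) as [-> | Hk1]; [simpl; nra |].
  specialize (IH ltac:(lia)). replace (S k - 2)%nat with (S (k - 2)) by lia.
  rewrite S_INR. simpl pow.
  assert (0 < 2 ^ (k - 2)) by (apply pow_lt; lra).
  assert (1 <= INR k) by (apply (le_INR 1); lia). nra.
Qed.

Lemma Rpower_telescope s x : 0 < s -> 1 <= x ->
  s * Rpower (x + 1) (- (1 + s)) <= Rpower x (- s) - Rpower (x + 1) (- s).
Proof.
  intros Hs Hx.
  assert (Hln : / (x + 1) <= ln (x + 1) - ln x).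
  { pose proof (ln_le_sub_1 (x / (x + 1)) ltac:(apply Rdiv_lt_0_compat; lra)) as Hratio.
    unfold Rdiv in Hratio. rewrite ln_mult, ln_Rinv in Hratio by (try apply Rinv_0_lt_compat; lra).
    replace (x * / (x + 1) - 1) with (- / (x + 1)) in Hratio by (field; lra). lra. }
  pose proof (exp_ineq1_le (s * (ln (x + 1) - ln x))) as Hexp.
  assert (Ex : Rpower x (- s) = Rpower (x + 1) (- s) * exp (s * (ln (x + 1) - ln x))).
  { unfold Rpower. rewrite <- exp_plus. f_equal. ring. }
  assert (Ex1 : Rpower (x + 1) (- (1 + s)) = Rpower (x + 1) (- s) * / (x + 1)).
  { rewrite <- (Rpower_1 (x + 1)) at 3 by lra. rewrite <- Rpower_Ropp, <- Rpower_plus.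
    f_equal. ring. }
  rewrite Ex, Ex1. pose proof (Rpower_pos (x + 1) (- s)).
  assert (s * / (x + 1) <= s * (ln (x + 1) - ln x)) by (apply Rmult_le_compat_l; lra).
  nra.
Qed.

Definition zeta_term (p : R) (i : nat) : R := Rpower (INR i + 2) (- p).

Lemma ex_series_zeta_term p : 1 < p -> ex_series (zeta_term p).
Proof.
  intros Hp. set (s := p - 1).
  assert (Hs : 0 < s) by (unfold s; lra).
  assert (Htel : forall x, 1 <= x ->
            s * Rpower (x + 1) (- p) <= Rpower x (- s) - Rpower (x + 1) (- s)).
  { intros x Hx. replace p with (1 + s) by (unfold s; ring). apply Rpower_telescope; lra. }
  assert (Hpart : forall n, s * sum_n (zeta_term p) n <= 1 - Rpower (INR n + 2) (- s)).
  { induction n as [| n IH].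
    - rewrite sum_O. unfold zeta_term. specialize (Htel 1 ltac:(lra)).
      replace (Rpower 1 (- s)) with 1 in Htel by (unfold Rpower; rewrite ln_1, Rmult_0_r, exp_0; reflexivity).
      simpl INR. replace (0 + 2) with (1 + 1) by ring. lra.
    - rewrite sum_Sn. change (plus ?u ?v) with (u + v). rewrite Rmult_plus_distr_l.
      specialize (Htel (INR n + 2) ltac:(pose proof (pos_INR n); lra)).
      unfold zeta_term at 2. rewrite S_INR. replace (INR n + 1 + 2) with (INR n + 2 + 1) by ring.
      lra. }
  assert (Hincr : forall n, sum_n (zeta_term p) n <= sum_n (zeta_term p) (S n)).
  { intros n. rewrite sum_Sn. pose proof (Rpower_pos (INR (S n) + 2) (- p)). unfold zeta_term.
    change (plus ?u ?v) with (u + v). lra. }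
  assert (Hbound : forall n, sum_n (zeta_term p) n <= / s).
  { intros n. specialize (Hpart n). pose proof (Rpower_pos (INR n + 2) (- s)).
    apply (Rmult_le_reg_l s); [lra |]. rewrite Rinv_r by lra. lra. }
  destruct (ex_finite_lim_seq_incr _ _ Hincr Hbound) as [L HL]. exists L. exact HL.
Qed.

Lemma Series_Rabs_le (u w : nat -> R) : ex_series w -> (forall i, Rabs (u i) <= w i) ->
  Rabs (Series u) <= Series w.
Proof.
  intros Hw Hu.
  assert (Habs : ex_series (fun i => Rabs (u i))).
  { apply (@ex_series_le R_AbsRing R_CompleteNormedModule) with (b := w); [| exact Hw].
    intros i. change (norm (Rabs (u i))) with (Rabs (Rabs (u i))). rewrite Rabs_Rabsolu. apply Hu. }
  eapply Rle_trans; [apply Series_Rabs, Habs |].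
  apply Series_le; [| exact Hw]. intros i. split; [apply Rabs_pos | apply Hu].
Qed.

Lemma Series_nonneg (u : nat -> R) : ex_series u -> (forall i, 0 <= u i) -> 0 <= Series u.
Proof.
  intros Hu Hpos. rewrite <- (Rmult_0_l (Series u)), <- Series_scal_l.
  apply Series_le; [| exact Hu]. intros i. rewrite Rmult_0_l. split; [lra | apply Hpos].
Qed.

Fixpoint sum1 (f : nat -> R) (n : nat) : R :=
  match n with O => 0 | S m => sum1 f m + f (S m) end.

Lemma sum1_mult_r f x n : sum1 (fun i => f i * x) n = sum1 f n * x.
Proof. induction n as [| n IH]; simpl; [ring | rewrite IH; ring]. Qed.

Lemma sum1_nonneg f n : (forall i, (1 <= i)%nat -> 0 <= f i) -> 0 <= sum1 f n.
Proof.
  intros Hf. induction n as [| n IH]; simpl; [lra |]. pose proof (Hf (S n) ltac:(lia)). lra.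
Qed.

Lemma prod1_pos f n : (forall i, (1 <= i)%nat -> 0 < f i) -> 0 < prod1 f n.
Proof.
  intros Hf. induction n as [| n IH]; simpl; [lra |].
  apply Rmult_lt_0_compat; [exact IH | apply Hf; lia].
Qed.

Lemma ln_prod1 f n : (forall i, (1 <= i)%nat -> 0 < f i) ->
  ln (prod1 f n) = sum1 (fun i => ln (f i)) n.
Proof.
  intros Hf. induction n as [| n IH]; simpl; [apply ln_1 |].
  rewrite ln_mult, IH; [reflexivity | apply prod1_pos, Hf | apply Hf; lia].
Qed.

Lemma rpow_pos_eq x y : 0 < x -> rpow x y = Rpower x y.
Proof. intros Hx. unfold rpow. destruct (Rle_dec x 0); [lra | reflexivity]. Qed.

Lemma prod1_rpow f n y : (forall i, (1 <= i)%nat -> 0 < f i) ->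
  prod1 (fun i => rpow (f i) y) n = Rpower (prod1 f n) y.
Proof.
  intros Hf. induction n as [| n IH]; simpl.
  - unfold Rpower. rewrite ln_1, Rmult_0_r, exp_0. reflexivity.
  - rewrite IH, rpow_pos_eq, Rpower_mult_distr by (try apply prod1_pos; apply Hf; lia).
    reflexivity.
Qed.

Lemma Cmod_le_Re_Im (z : C) : Cmod z <= Rabs (Re z) + Rabs (Im z).
Proof.
  pose proof (Cmod_ge_0 z). pose proof (Cmod2_alt z).
  pose proof (Rabs_pos (Re z)). pose proof (Rabs_pos (Im z)).
  rewrite <- (pow2_abs (Re z)), <- (pow2_abs (Im z)) in *. nra.
Qed.

Lemma im_le_Cmod (z : C) : Rabs (Im z) <= Cmod z.
Proof.
  pose proof (Cmod_ge_0 z). pose proof (Cmod2_alt z). pose proof (Rabs_pos (Im z)).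
  rewrite <- (pow2_abs (Im z)) in *. pose proof (pow2_ge_0 (Re z)). nra.
Qed.

Lemma Cmod_csum1_le f w n : (forall j, (1 <= j <= n)%nat -> Cmod (f j) <= w j) ->
  Cmod (csum1 f n) <= sum1 w n.
Proof.
  induction n as [| n IH]; intros Hfw; simpl.
  - rewrite Cmod_0. lra.
  - eapply Rle_trans; [apply Cmod_triangle |].
    pose proof (Hfw (S n) ltac:(lia)).
    assert (Cmod (csum1 f n) <= sum1 w n) by (apply IH; intros; apply Hfw; lia).
    lra.
Qed.

(** * Quasi-decreasing sequences along chains of jumps *)

Lemma incr_nat_seq_segment (c : nat -> nat) : (forall i, (c i < c (S i))%nat) ->
  forall i n, (c i < n)%nat -> exists j, (i <= j)%nat /\ (c j < n <= c (S j))%nat.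
Proof.
  intros Hc i n. induction n as [| n IH]; intros Hn; [lia |].
  destruct (Nat.eq_dec n (c i)) as [-> | Hne].
  - exists i. specialize (Hc i). lia.
  - destruct (IH ltac:(lia)) as [j [Hij Hj]].
    destruct (Nat.eq_dec n (c (S j))) as [-> | Hne'].
    + exists (S j). specialize (Hc (S j)). lia.
    + exists j. lia.
Qed.

Section Jumps.

Variables (s y : nat -> R) (th A C : R) (M : nat).
Hypothesis Hth : 0 < th < 1.
Hypothesis HA : 0 <= A.
Hypothesis HC : 0 <= C.
Hypothesis Hs : forall n, (M <= n)%nat -> 0 <= s n.
Hypothesis Hy : forall n, (M <= n)%nat -> 0 <= y n.

Definition jump (N k : nat) : Prop :=
  (1 <= k)%nat /\
  s (N + k)%nat <= s N + A * th ^ N /\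
  ((2 <= k)%nat -> s (N + k)%nat <= 3 / 4 * s N + A * th ^ N) /\
  (forall j, (1 <= j <= k)%nat -> y (N + j)%nat <= C * (s N + th ^ N)).

Definition geom_tail (n : nat) : R := A * th ^ n / (1 - th).

Lemma geom_tail_nonneg n : 0 <= geom_tail n.
Proof. apply Rdiv_le_0_compat; [apply Rmult_le_pos; [lra | apply pow_le; lra] | lra]. Qed.

Lemma geom_tail_step n m : (n < m)%nat -> A * th ^ n + geom_tail m <= geom_tail n.
Proof.
  intros Hnm. unfold geom_tail.
  pose proof (pow_le_pow_lt1 th (S n) m ltac:(lra) Hnm).
  assert (A * th ^ m / (1 - th) <= A * th ^ S n / (1 - th)).
  { apply Rmult_le_compat_r; [left; apply Rinv_0_lt_compat; lra |]. apply Rmult_le_compat_l; lra. }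
  replace (A * th ^ n / (1 - th)) with (A * th ^ n + A * th ^ S n / (1 - th)) by (simpl; field; lra).
  lra.
Qed.

Lemma geom_tail_cvg_0 : is_lim_seq geom_tail 0.
Proof.
  replace (Finite 0) with (Rbar_mult (A / (1 - th)) 0) by (simpl; f_equal; ring).
  apply is_lim_seq_ext with (u := fun n => A / (1 - th) * th ^ n); [intros n; unfold geom_tail; field; lra |].
  apply is_lim_seq_scal_l, is_lim_seq_geom. rewrite Rabs_pos_eq; lra.
Qed.

Lemma quasi_decr_cvg n0 : (M <= n0)%nat ->
  (forall n, (n0 <= n)%nat -> s (S n) <= s n + A * th ^ n) -> exists L : R, is_lim_seq s L.
Proof.
  intros Hn0 Hstep.
  set (v := fun t => s (t + n0)%nat + geom_tail (t + n0)%nat).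
  assert (Hdecr : forall t, v (S t) <= v t).
  { intros t. unfold v. change (S t + n0)%nat with (S (t + n0)).
    pose proof (Hstep (t + n0)%nat ltac:(lia)). pose proof (geom_tail_step (t + n0) (S (t + n0)) ltac:(lia)).
    lra. }
  assert (Hlow : forall t, 0 <= v t).
  { intros t. unfold v. pose proof (Hs (t + n0)%nat ltac:(lia)). pose proof (geom_tail_nonneg (t + n0)). lra. }
  destruct (ex_finite_lim_seq_decr v 0 Hdecr Hlow) as [L HL].
  exists L. apply (is_lim_seq_incr_n s n0).
  replace (Finite L) with (Finite (L - 0)) by (f_equal; ring).
  apply is_lim_seq_ext with (u := fun t => v t - geom_tail (t + n0)%nat); [intros t; unfold v; ring |].
  apply is_lim_seq_minus'; [exact HL |].
  apply (is_lim_seq_incr_n geom_tail n0), geom_tail_cvg_0.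
Qed.

Section Chain.

Variable hop : nat -> nat.
Hypothesis Hhop : forall N, (M <= N)%nat -> jump N (hop N).

Definition chain (i : nat) : nat := Nat.iter i (fun N => N + hop N)%nat M.

Lemma chain_S i : chain (S i) = (chain i + hop (chain i))%nat.
Proof. reflexivity. Qed.

Lemma chain_ge i : (M + i <= chain i)%nat.
Proof.
  induction i as [| i IH]; [simpl; lia |].
  rewrite chain_S. destruct (Hhop (chain i) ltac:(lia)) as [Hk _]. lia.
Qed.

Lemma chain_jump i : jump (chain i) (hop (chain i)).
Proof. apply Hhop. pose proof (chain_ge i). lia. Qed.

Lemma chain_lt i : (chain i < chain (S i))%nat.
Proof. rewrite chain_S. destruct (chain_jump i) as [Hk _]. lia. Qed.

Definition potential (i : nat) : R := s (chain i) + geom_tail (chain i).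

Lemma potential_nonneg i : 0 <= potential i.
Proof.
  unfold potential. pose proof (geom_tail_nonneg (chain i)).
  pose proof (Hs (chain i) ltac:(pose proof (chain_ge i); lia)). lra.
Qed.

Lemma potential_S_le i : potential (S i) <= potential i.
Proof.
  unfold potential. destruct (chain_jump i) as [_ [Hstep _]]. rewrite <- chain_S in Hstep.
  pose proof (geom_tail_step _ _ (chain_lt i)). lra.
Qed.

Lemma potential_S_contract i : (2 <= hop (chain i))%nat ->
  potential (S i) <= 3 / 4 * potential i + geom_tail (chain i) / 4.
Proof.
  intros Hk. unfold potential. destruct (chain_jump i) as [_ [_ [Hstep _]]].
  specialize (Hstep Hk). rewrite <- chain_S in Hstep.
  pose proof (geom_tail_step _ _ (chain_lt i)). lra.
Qed.

Lemma potential_antitone i j : (i <= j)%nat -> potential j <= potential i.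
Proof.
  induction 1 as [| j _ IH]; [lra |]. pose proof (potential_S_le j). lra.
Qed.

Lemma chain_unit_hops_cvg :
  (exists i0, forall i, (i0 <= i)%nat -> hop (chain i) = 1%nat) -> exists L : R, is_lim_seq s L.
Proof.
  intros [i0 Hi0].
  assert (Hchain : forall t, chain (i0 + t) = (chain i0 + t)%nat).
  { induction t as [| t IH]; [rewrite !Nat.add_0_r; reflexivity |].
    rewrite Nat.add_succ_r, chain_S, Hi0, IH by lia. lia. }
  apply (quasi_decr_cvg (chain i0)); [pose proof (chain_ge i0); lia |].
  intros n Hn. replace n with (chain (i0 + (n - chain i0))) by (rewrite Hchain; lia).
  destruct (chain_jump (i0 + (n - chain i0))) as [_ [Hstep _]].
  rewrite Hi0 in Hstep by lia. rewrite Nat.add_1_r in Hstep. exact Hstep.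
Qed.

(* The potential decreases, and infinitely many hops of length [>= 2] make it
   contract by [3/4] up to a vanishing error; so its limit [L] satisfies [L <= 3/4 L]. *)
Lemma potential_cvg_0 :
  (forall i0, exists i, (i0 <= i)%nat /\ (2 <= hop (chain i))%nat) -> is_lim_seq potential 0.
Proof.
  intros Hlong.
  destruct (ex_finite_lim_seq_decr potential 0 potential_S_le potential_nonneg) as [L HL].
  assert (HLge : forall i, L <= potential i)
    by (apply is_lim_seq_decr_compare; [exact HL | apply potential_S_le]).
  assert (HL0 : Rbar_le 0 L).
  { apply (is_lim_seq_le (fun _ => 0) potential); [apply potential_nonneg | apply is_lim_seq_const | exact HL]. }
  simpl in HL0.
  replace 0 with L; [exact HL |].
  apply Rle_antisym; [| exact HL0]. apply Rnot_lt_le. intros HLpos.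
  set (e := mkposreal (L / 8) ltac:(lra)).
  apply is_lim_seq_spec in HL. destruct (HL e) as [i1 Hnear].
  pose proof geom_tail_cvg_0 as Htail. apply is_lim_seq_spec in Htail.
  destruct (Htail e) as [i2 Htail_small].
  destruct (Hlong (i1 + i2)%nat) as [i [Hi Hk]].
  specialize (Hnear i ltac:(lia)). specialize (Htail_small (chain i) ltac:(pose proof (chain_ge i); lia)).
  change (pos e) with (L / 8) in Hnear, Htail_small. fold (geom_tail (chain i)) in Htail_small.
  apply Rabs_lt_between' in Hnear. apply Rabs_lt_between' in Htail_small.
  pose proof (potential_S_contract i Hk). pose proof (HLge (S i)). lra.
Qed.

Lemma chain_y_le i n : (chain i < n)%nat -> y n <= C * (potential i + th ^ i).
Proof.
  intros Hn. destruct (incr_nat_seq_segment chain chain_lt i n Hn) as [j [Hij [Hlo Hhi]]].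
  destruct (chain_jump j) as [_ [_ [_ Hy_le]]]. rewrite chain_S in Hhi.
  specialize (Hy_le (n - chain j)%nat ltac:(lia)). replace (chain j + (n - chain j))%nat with n in Hy_le by lia.
  pose proof (potential_antitone i j Hij). pose proof (geom_tail_nonneg (chain j)).
  pose proof (pow_le_pow_lt1 th i (chain j) ltac:(lra) ltac:(pose proof (chain_ge j); lia)).
  unfold potential in *. apply (Rle_trans _ _ _ Hy_le). apply Rmult_le_compat_l; [exact HC |]. lra.
Qed.

Lemma chain_y_cvg_0 : is_lim_seq potential 0 -> is_lim_seq y 0.
Proof.
  intros HV.
  assert (Hu : is_lim_seq (fun i => C * (potential i + th ^ i)) 0).
  { replace (Finite 0) with (Rbar_mult C (0 + 0)) by (simpl; f_equal; ring).
    apply is_lim_seq_scal_l, is_lim_seq_plus'; [exact HV |].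
    apply is_lim_seq_geom. rewrite Rabs_pos_eq; lra. }
  apply is_lim_seq_spec in Hu. apply is_lim_seq_spec. intros e.
  destruct (Hu e) as [i Hi]. specialize (Hi i (le_n i)).
  exists (S (chain i)). intros n Hn.
  pose proof (chain_y_le i n ltac:(lia)). pose proof (Hy n ltac:(pose proof (chain_ge i); lia)).
  apply Rabs_lt_between' in Hi. apply Rabs_lt_between'. lra.
Qed.

End Chain.

Theorem jump_dichotomy : (forall N, (M <= N)%nat -> exists k, jump N k) ->
  (exists L : R, is_lim_seq s L) \/ is_lim_seq y 0.
Proof.
  intros Hjump.
  destruct (choice (fun N k => (M <= N)%nat -> jump N k)) as [hop Hhop].
  { intros N. destruct (le_lt_dec M N) as [HN | HN]; [destruct (Hjump N HN) as [k Hk]; exists k; auto |].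
    exists O. lia. }
  destruct (classic (exists i0, forall i, (i0 <= i)%nat -> hop (chain hop i) = 1%nat)) as [Hunit | Hlong].
  - left. exact (chain_unit_hops_cvg hop Hhop Hunit).
  - right. apply (chain_y_cvg_0 hop Hhop), (potential_cvg_0 hop Hhop).
    intros i0. apply NNPP. intros Hno. apply Hlong. exists i0. intros i Hi.
    destruct (chain_jump hop Hhop i) as [Hk _].
    destruct (Nat.eq_dec (hop (chain hop i)) 1) as [Heq | Hne]; [exact Heq |].
    exfalso. apply Hno. exists i. split; [exact Hi | lia].
Qed.

End Jumps.

(** * Sequences with frequently large terms *)

Section LargeTerms.

Variables (l E r h : nat -> R) (a eps th Ch G : R).
Hypothesis Ha : 0 < a < 1.
Hypothesis Heps : 0 < eps.
Hypothesis Hth : 0 < th < 1.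
Hypothesis HCh : 0 <= Ch.
Hypothesis HG : 0 <= G.
Hypothesis HE_pos : forall n, (1 <= n)%nat -> 0 < E n.
Hypothesis HE_growth : forall n, (1 <= n)%nat -> (1 + r n) * E n <= E (S n).
Hypothesis Hr : forall n, (1 <= n)%nat -> 1 <= r n <= r (S n).
Hypothesis Hh : forall n, (1 <= n)%nat -> 0 <= h n <= Ch * th ^ n * E (S n).
Hypothesis HE_inv : forall n, (1 <= n)%nat -> / E (S n) <= th ^ n.
Hypothesis HE_pow : forall n, (1 <= n)%nat -> Rpower (E (S n)) (a - 1) <= th ^ n.
Hypothesis Hl_incr : forall n, (1 <= n)%nat -> l n < l (S n).
Hypothesis Hl_ge : forall n, (1 <= n)%nat -> (1 + eps) * ln (INR n) <= l n.

Definition log_weight (N : nat) : R := r N * sum1 l N + h N.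

Definition large_term (N k : nat) : Prop :=
  l (N + k)%nat - 2 * Rpower (l (N + k)%nat) a < log_weight N + G + (1 + eps / 2) * ln (INR k + 1).

Definition mean_ratio (n : nat) : R := sum1 l n / E n.

Lemma l_nonneg n : (1 <= n)%nat -> 0 <= l n.
Proof.
  intros Hn. pose proof (Hl_ge n Hn).
  assert (0 <= ln (INR n)) by (apply ln_nonneg; apply (le_INR 1); lia). nra.
Qed.

Lemma l_le m n : (1 <= m)%nat -> (m <= n)%nat -> l m <= l n.
Proof.
  intros Hm. induction 1 as [| n Hmn IH]; [lra |]. pose proof (Hl_incr n ltac:(lia)). lra.
Qed.

Lemma sum1_l_add_le N j : (1 <= N)%nat -> sum1 l (N + j) <= sum1 l N + INR j * l (N + j)%nat.
Proof.
  intros HN. induction j as [| j IH]; [rewrite Nat.add_0_r; simpl; lra |].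
  rewrite Nat.add_succ_r. simpl sum1. rewrite S_INR.
  pose proof (l_le (N + j) (S (N + j)) ltac:(lia) ltac:(lia)).
  pose proof (l_nonneg (N + j) ltac:(lia)). pose proof (pos_INR j). nra.
Qed.

Lemma E_pow2_le n j : (1 <= n)%nat -> 2 ^ j * E n <= E (n + j)%nat.
Proof.
  intros Hn. induction j as [| j IH]; [rewrite Nat.add_0_r; simpl; lra |].
  rewrite Nat.add_succ_r. simpl pow.
  pose proof (HE_growth (n + j) ltac:(lia)). pose proof (Hr (n + j) ltac:(lia)).
  pose proof (HE_pos (n + j) ltac:(lia)). nra.
Qed.

Lemma E_sqr_le n : (1 <= n)%nat -> (1 + r n) * (1 + r n) * E n <= E (S (S n)).
Proof.
  intros Hn. pose proof (HE_growth n Hn). pose proof (HE_growth (S n) ltac:(lia)).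
  pose proof (Hr n Hn). pose proof (HE_pos (S n) ltac:(lia)). pose proof (HE_pos n Hn).
  assert ((1 + r n) * E (S n) <= (1 + r (S n)) * E (S n)) by nra. nra.
Qed.

Lemma th_pow_E_ge1 n : (1 <= n)%nat -> 1 <= th ^ n * E (S n).
Proof.
  intros Hn. pose proof (HE_inv n Hn) as Hinv. pose proof (HE_pos (S n) ltac:(lia)).
  apply (Rmult_le_compat_r (E (S n))) in Hinv; [| lra]. rewrite Rinv_l in Hinv by lra. exact Hinv.
Qed.

Lemma th_pow_le1 n : th ^ n <= 1.
Proof. rewrite <- (pow1 n). apply pow_incr. lra. Qed.

Lemma mean_ratio_nonneg n : (1 <= n)%nat -> 0 <= mean_ratio n.
Proof.
  intros Hn. apply Rdiv_le_0_compat; [| apply HE_pos, Hn].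
  apply sum1_nonneg. apply l_nonneg.
Qed.

Lemma mean_ratio_S n : (1 <= n)%nat ->
  mean_ratio (S n) = E n / E (S n) * mean_ratio n + l (S n) / E (S n).
Proof.
  intros Hn. unfold mean_ratio. simpl sum1.
  pose proof (HE_pos n Hn). pose proof (HE_pos (S n) ltac:(lia)). field. lra.
Qed.

(* [mean_ratio] follows [x_{n+1} = q_n x_n + y_{n+1}] with [q_n <= 1/2], so it stays below
   [max (x_M) (2 sup y)]. *)
Lemma mean_ratio_bounded :
  (exists Y M1, forall n, (M1 <= n)%nat -> l n / E n <= Y) ->
  exists B M2, (1 <= M2)%nat /\ forall n, (M2 <= n)%nat -> mean_ratio n <= B.
Proof.
  intros [Y [M1 HY]]. set (M2 := Nat.max M1 1).
  exists (Rmax (mean_ratio M2) (2 * Y)), M2. split; [lia |].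
  intros n Hn. replace n with (M2 + (n - M2))%nat by lia.
  induction (n - M2)%nat as [| t IH]; [rewrite Nat.add_0_r; apply Rmax_l |].
  rewrite Nat.add_succ_r, mean_ratio_S by lia.
  set (m := (M2 + t)%nat) in *.
  pose proof (HE_pos m ltac:(lia)). pose proof (HE_pos (S m) ltac:(lia)).
  assert (Hq : E m / E (S m) <= / 2).
  { apply (Rmult_le_reg_r (E (S m))); [lra |]. unfold Rdiv. rewrite Rmult_assoc, Rinv_l by lra.
    pose proof (HE_growth m ltac:(lia)). pose proof (Hr m ltac:(lia)). nra. }
  assert (0 <= E m / E (S m)) by (apply Rdiv_le_0_compat; lra).
  pose proof (mean_ratio_nonneg m ltac:(lia)).
  pose proof (HY (S m) ltac:(lia)). pose proof (Rmax_r (mean_ratio M2) (2 * Y)).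
  assert (E m / E (S m) * mean_ratio m <= / 2 * Rmax (mean_ratio M2) (2 * Y)) by nra.
  lra.
Qed.

Lemma ratio_cvg_of_mean_ratio_cvg :
  (exists q : R, is_lim_seq (fun n => E n / E (S n)) q) ->
  (exists L : R, is_lim_seq mean_ratio L) -> exists L : R, is_lim_seq (fun n => l n / E n) L.
Proof.
  intros [q Hq] [L HL]. exists (L - q * L).
  apply is_lim_seq_incr_1.
  apply is_lim_seq_ext_loc with (u := fun n => mean_ratio (S n) - E n / E (S n) * mean_ratio n).
  { exists 1%nat. intros n Hn. rewrite mean_ratio_S by lia. ring. }
  apply is_lim_seq_minus'; [apply -> is_lim_seq_incr_1; exact HL |].
  apply is_lim_seq_mult'; assumption.
Qed.

Lemma log_weight_le N : (1 <= N)%nat -> log_weight N <= mean_ratio N * E (S N) + h N.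
Proof.
  intros HN. unfold log_weight, mean_ratio.
  pose proof (HE_pos N HN). pose proof (HE_growth N HN). pose proof (Hr N HN).
  pose proof (sum1_nonneg l N (l_nonneg)).
  replace (sum1 l N / E N * E (S N)) with (sum1 l N * (E (S N) / E N)) by (field; lra).
  assert (r N <= E (S N) / E N).
  { apply (Rmult_le_reg_r (E N)); [lra |]. unfold Rdiv. rewrite Rmult_assoc, Rinv_l by lra. nra. }
  nra.
Qed.

Lemma main_term_contract N k : (1 <= N)%nat -> (2 <= k)%nat ->
  sum1 l N * (1 + INR k * r N) / E (N + k)%nat <= 3 / 4 * mean_ratio N.
Proof.
  intros HN Hk. unfold mean_ratio.
  pose proof (HE_pos N HN) as HEN. pose proof (Hr N HN) as [Hr1 _].
  pose proof (E_sqr_le N HN).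
  pose proof (E_pow2_le (S (S N)) (k - 2) ltac:(lia)) as HEk2.
  replace (S (S N) + (k - 2))%nat with (N + k)%nat in HEk2 by lia.
  pose proof (affine_le_sqr_pow2 (r N) k Hr1 Hk).
  pose proof (sum1_nonneg l N l_nonneg) as HS.
  pose proof (pow_lt 2 (k - 2) ltac:(lra)).
  assert (HEk : 0 < E (N + k)%nat) by (apply HE_pos; lia).
  apply (Rmult_le_reg_r (E (N + k)%nat)); [exact HEk |].
  replace (sum1 l N * (1 + INR k * r N) / E (N + k)%nat * E (N + k)%nat)
    with (sum1 l N * (1 + INR k * r N)) by (field; lra).
  replace (3 / 4 * (sum1 l N / E N) * E (N + k)%nat)
    with (sum1 l N * (3 / 4 * (E (N + k)%nat / E N))) by (field; lra).
  apply Rmult_le_compat_l; [exact HS |].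
  assert (3 / 4 * ((1 + r N) * (1 + r N)) * 2 ^ (k - 2) * E N <= 3 / 4 * E (N + k)%nat) by nra.
  apply (Rmult_le_reg_r (E N)); [exact HEN |].
  replace (3 / 4 * (E (N + k)%nat / E N) * E N) with (3 / 4 * E (N + k)%nat) by (field; lra).
  nra.
Qed.

Lemma main_term_le N k : (1 <= N)%nat -> (1 <= k)%nat ->
  sum1 l N * (1 + INR k * r N) / E (N + k)%nat <= mean_ratio N.
Proof.
  intros HN Hk. destruct (Nat.eq_dec k 1) as [-> | Hk1].
  - pose proof (HE_pos N HN). pose proof (HE_pos (S N) ltac:(lia)). pose proof (HE_growth N HN) as Hgrowth.
    replace (N + 1)%nat with (S N) by lia. change (INR 1) with 1. rewrite Rmult_1_l.
    unfold mean_ratio, Rdiv. rewrite Rmult_assoc. apply Rmult_le_compat_l; [apply sum1_nonneg, l_nonneg |].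
    replace (/ E N) with (E (S N) / E N * / E (S N)) by (field; lra).
    apply Rmult_le_compat_r; [left; apply Rinv_0_lt_compat; lra |].
    apply (Rmult_le_reg_r (E N)); [lra |]. unfold Rdiv. rewrite Rmult_assoc, Rinv_l, Rmult_1_r by lra.
    exact Hgrowth.
  - pose proof (main_term_contract N k HN ltac:(lia)). pose proof (mean_ratio_nonneg N HN). lra.
Qed.

Lemma l_pos n : (2 <= n)%nat -> 0 < l n.
Proof.
  intros Hn. pose proof (Hl_ge n ltac:(lia)).
  assert (0 < ln (INR n)) by (apply ln_pos_lt; apply (lt_INR 1); lia). nra.
Qed.

Definition Cl : R := 4 + 8 / eps.

Lemma Cl_pos : 0 < Cl.
Proof. unfold Cl. assert (0 < 8 / eps) by (apply Rdiv_lt_0_compat; lra). lra. Qed.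

Section Slack.

Variable X0 : R.
Hypothesis HX0 : 0 <= X0.
Hypothesis Hsub : forall x, 0 < x -> 2 * Rpower x a <= eps / (4 * (1 + eps)) * x + X0.

Definition slack (N : nat) : R := log_weight N + G + X0.

(* Since [l (N+k) >= (1+eps) ln (N+k)] beats [(1+eps/2) ln (k+1)], a large term has
   [ln (k+1) = O(slack N)], and then [l (N+k) < 4/3 (3 + 4/eps) slack N <= Cl * slack N]. *)
Lemma large_term_slack N k : (1 <= N)%nat -> (1 <= k)%nat -> large_term N k ->
  eps / 4 * ln (INR k + 1) < slack N /\ l (N + k)%nat <= Cl * slack N.
Proof.
  intros HN Hk Hlarge. unfold large_term in Hlarge. unfold slack, Cl.
  set (L := l (N + k)%nat) in *. set (lk := ln (INR k + 1)) in *.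
  set (eta := eps / (4 * (1 + eps))) in *.
  assert (Heta : 0 < eta < 1 / 4).
  { unfold eta. split; [apply Rdiv_lt_0_compat; lra |].
    apply (Rmult_lt_reg_r (4 * (1 + eps))); [lra |]. unfold Rdiv. rewrite Rmult_assoc, Rinv_l by lra. lra. }
  assert (Heta_eps : (1 - eta) * (1 + eps) = 1 + 3 * eps / 4) by (unfold eta; field; lra).
  assert (Hlk0 : 0 < lk) by (apply ln_pos_lt; assert (1 <= INR k) by (apply (le_INR 1); lia); lra).
  assert (HlkL : (1 + eps) * lk <= L).
  { eapply Rle_trans; [| apply Hl_ge; lia]. apply Rmult_le_compat_l; [lra |].
    apply ln_le; [pose proof (pos_INR k); lra |].
    rewrite plus_INR. assert (1 <= INR N) by (apply (le_INR 1); lia). lra. }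
  pose proof (Hsub L ltac:(nra)) as HsubL.
  assert (H34 : (1 + 3 * eps / 4) * lk <= (1 - eta) * L).
  { rewrite <- Heta_eps, Rmult_assoc. apply Rmult_le_compat_l; lra. }
  assert (Hsmall : eps / 4 * lk < log_weight N + G + X0) by lra.
  split; [exact Hsmall |].
  assert (Hlk : lk < 4 / eps * (log_weight N + G + X0)).
  { apply (Rmult_lt_reg_l (eps / 4)); [lra |].
    replace (eps / 4 * (4 / eps * (log_weight N + G + X0))) with (log_weight N + G + X0) by (field; lra).
    exact Hsmall. }
  assert (3 / 4 * L < (3 + 4 / eps) * (log_weight N + G + X0)) by nra.
  assert (0 < 4 / eps) by (apply Rdiv_lt_0_compat; lra). nra.
Qed.

Lemma large_term_l_le N k : (1 <= N)%nat -> (1 <= k)%nat -> large_term N k ->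
  l (N + k)%nat <= log_weight N + G + (1 + eps / 2) * ln (INR k + 1) + 2 * Rpower (Cl * slack N) a.
Proof.
  intros HN Hk Hlarge. destruct (large_term_slack N k HN Hk Hlarge) as [_ HL].
  pose proof (l_pos (N + k) ltac:(lia)) as Hpos.
  pose proof (Rle_Rpower_l _ _ a ltac:(lra) (conj Hpos HL)). unfold large_term in Hlarge. lra.
Qed.

Lemma slack_le N : (1 <= N)%nat -> slack N <= (mean_ratio N + (Ch + G + X0) * th ^ N) * E (S N).
Proof.
  intros HN. unfold slack. pose proof (log_weight_le N HN). pose proof (Hh N HN).
  pose proof (th_pow_E_ge1 N HN).
  assert ((G + X0) * 1 <= (G + X0) * (th ^ N * E (S N))) by (apply Rmult_le_compat_l; lra).
  nra.
Qed.

Lemma large_term_ratio_le N k j : (1 <= N)%nat -> (1 <= k)%nat -> large_term N k -> (1 <= j <= k)%nat ->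
  l (N + j)%nat / E (N + j)%nat <= Cl * (1 + Ch + G + X0) * (mean_ratio N + th ^ N).
Proof.
  intros HN Hk Hlarge Hj. destruct (large_term_slack N k HN Hk Hlarge) as [_ HL].
  pose proof (slack_le N HN) as Hslack. pose proof (mean_ratio_nonneg N HN). pose proof (pow_lt th N ltac:(lra)).
  pose proof (HE_pos (S N) ltac:(lia)). pose proof (l_nonneg (N + j) ltac:(lia)).
  pose proof Cl_pos as HCl.
  assert (HEj : E (S N) <= E (N + j)%nat).
  { pose proof (E_pow2_le (S N) (j - 1) ltac:(lia)) as HE2.
    replace (S N + (j - 1))%nat with (N + j)%nat in HE2 by lia.
    pose proof (pow_R1_Rle 2 (j - 1) ltac:(lra)). nra. }
  assert (Hlj : l (N + j)%nat <= Cl * (1 + Ch + G + X0) * (mean_ratio N + th ^ N) * E (S N)).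
  { pose proof (l_le (N + j) (N + k) ltac:(lia) ltac:(lia)).
    assert ((mean_ratio N + (Ch + G + X0) * th ^ N) <= (1 + Ch + G + X0) * (mean_ratio N + th ^ N)) by nra.
    assert (slack N <= (1 + Ch + G + X0) * (mean_ratio N + th ^ N) * E (S N))
      by (eapply Rle_trans; [exact Hslack | apply Rmult_le_compat_r; lra]).
    assert (Cl * slack N <= Cl * ((1 + Ch + G + X0) * (mean_ratio N + th ^ N) * E (S N)))
      by (apply Rmult_le_compat_l; lra).
    lra. }
  apply (Rmult_le_reg_r (E (N + j)%nat)); [lra |].
  unfold Rdiv. rewrite Rmult_assoc, Rinv_l, Rmult_1_r by lra.
  assert (0 <= Cl * (1 + Ch + G + X0) * (mean_ratio N + th ^ N))
    by (apply Rmult_le_pos; [apply Rmult_le_pos |]; lra).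
  nra.
Qed.

Lemma large_term_sum_le N k : (1 <= N)%nat -> (1 <= k)%nat -> large_term N k ->
  sum1 l (N + k) <= sum1 l N * (1 + INR k * r N)
    + 2 ^ (k - 1) * (h N + 3 * (G + (1 + eps / 2)) + 2 * Rpower (Cl * slack N) a).
Proof.
  intros HN Hk Hlarge.
  pose proof (large_term_l_le N k HN Hk Hlarge) as HL. unfold log_weight in HL.
  pose proof (sum1_l_add_le N k HN).
  assert (Hk1 : 1 <= INR k) by (apply (le_INR 1); lia).
  assert (Hlk : 0 <= ln (INR k + 1) <= INR k).
  { split; [apply ln_nonneg; lra | pose proof (ln_le_sub_1 (INR k + 1) ltac:(lra)); lra]. }
  set (p := 1 + eps / 2) in *. set (P := Rpower (Cl * slack N) a) in *.
  set (lk := ln (INR k + 1)) in *.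
  pose proof (INR_le_pow2 k Hk). pose proof (INR_sqr_le_pow2 k Hk).
  pose proof (Hh N HN). assert (0 < P) by apply Rpower_pos.
  assert (INR k * (h N + 2 * P) <= 2 ^ (k - 1) * (h N + 2 * P)) by nra.
  assert (INR k * (G + p * lk) <= 3 * (G + p) * 2 ^ (k - 1)).
  { assert (0 <= G * (INR k * (INR k - 1))) by (apply Rmult_le_pos; [lra | apply Rmult_le_pos; lra]).
    assert (0 <= p * INR k * (INR k - lk)) by (apply Rmult_le_pos; [apply Rmult_le_pos; unfold p; lra | lra]).
    assert (INR k * (G + p * lk) <= (G + p) * (INR k * INR k)) by nra.
    assert (0 < p) by (unfold p; lra). nra. }
  assert (INR k * l (N + k)%nat <= INR k * (r N * sum1 l N + h N + G + p * lk + 2 * P)) by nra.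
  nra.
Qed.

Section Bounded.

Variables (B : R) (M2 : nat).
Hypothesis HM2 : (1 <= M2)%nat.
Hypothesis HB : forall n, (M2 <= n)%nat -> mean_ratio n <= B.

Definition jump_const : R := Ch + 3 * (G + (1 + eps / 2)) + 2 * Rpower (Cl * (B + Ch + G + X0)) a.

Lemma error_term_le N : (M2 <= N)%nat -> 0 < slack N ->
  h N + 3 * (G + (1 + eps / 2)) + 2 * Rpower (Cl * slack N) a <= jump_const * th ^ N * E (S N).
Proof.
  intros HN Hslack. unfold jump_const. set (CP := B + Ch + G + X0).
  assert (HB0 : 0 <= B) by (pose proof (HB N HN); pose proof (mean_ratio_nonneg N ltac:(lia)); lra).
  pose proof (Hh N ltac:(lia)) as [_ HhN]. pose proof (th_pow_E_ge1 N ltac:(lia)).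
  pose proof (HE_pos (S N) ltac:(lia)). pose proof (pow_lt th N ltac:(lra)).
  pose proof Cl_pos as HCl.
  assert (Hslack_le : slack N <= CP * E (S N)).
  { eapply Rle_trans; [apply slack_le; lia |]. apply Rmult_le_compat_r; [lra |].
    pose proof (HB N HN). pose proof (th_pow_le1 N).
    assert (0 <= (Ch + G + X0) * (1 - th ^ N)) by (apply Rmult_le_pos; lra). unfold CP. lra. }
  assert (HP : Rpower (Cl * slack N) a <= Rpower (Cl * CP) a * th ^ N * E (S N)).
  { apply Rle_trans with (Rpower (Cl * CP * E (S N)) a).
    { apply Rle_Rpower_l; [lra | split; nra]. }
    rewrite <- Rpower_mult_distr by nra. rewrite (Rpower_split_1 (E (S N)) a) by lra.
    rewrite Rmult_assoc. apply Rmult_le_compat_l; [left; apply Rpower_pos |].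
    apply Rmult_le_compat_r; [lra | apply HE_pow; lia]. }
  assert (3 * (G + (1 + eps / 2)) <= 3 * (G + (1 + eps / 2)) * th ^ N * E (S N)) by nra.
  lra.
Qed.

Lemma large_term_jump N k : (M2 <= N)%nat -> (1 <= k)%nat -> large_term N k ->
  jump mean_ratio (fun n => l n / E n) th jump_const (Cl * (1 + Ch + G + X0)) N k.
Proof.
  intros HN Hk Hlarge.
  destruct (large_term_slack N k ltac:(lia) Hk Hlarge) as [Hsmall _].
  assert (Hslack : 0 < slack N).
  { assert (0 <= ln (INR k + 1)) by (apply ln_nonneg; pose proof (pos_INR k); lra). nra. }
  pose proof (large_term_sum_le N k ltac:(lia) Hk Hlarge) as Hsum.
  pose proof (error_term_le N HN Hslack) as Herr.
  set (Y := h N + 3 * (G + (1 + eps / 2)) + 2 * Rpower (Cl * slack N) a) in *.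
  assert (Hrest : 2 ^ (k - 1) * Y / E (N + k)%nat <= jump_const * th ^ N).
  { pose proof (E_pow2_le (S N) (k - 1) ltac:(lia)) as HE2.
    replace (S N + (k - 1))%nat with (N + k)%nat in HE2 by lia.
    pose proof (pow_lt 2 (k - 1) ltac:(lra)). pose proof (HE_pos (S N) ltac:(lia)).
    apply (Rmult_le_reg_r (E (N + k)%nat)); [nra |]. unfold Rdiv. rewrite Rmult_assoc, Rinv_l, Rmult_1_r by nra.
    assert (0 <= jump_const * th ^ N).
    { apply Rmult_le_pos; [| apply pow_le; lra]. unfold jump_const.
      pose proof (Rpower_pos (Cl * (B + Ch + G + X0)) a). lra. }
    nra. }
  assert (Hsplit : mean_ratio (N + k)
            <= sum1 l N * (1 + INR k * r N) / E (N + k)%nat + 2 ^ (k - 1) * Y / E (N + k)%nat).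
  { unfold mean_ratio, Rdiv. rewrite <- Rmult_plus_distr_r. apply Rmult_le_compat_r; [| exact Hsum].
    left. apply Rinv_0_lt_compat, HE_pos. lia. }
  split; [exact Hk |]. split; [| split].
  - pose proof (main_term_le N k ltac:(lia) Hk). lra.
  - intros Hk2. pose proof (main_term_contract N k ltac:(lia) Hk2). lra.
  - intros j Hj. apply (large_term_ratio_le N k j ltac:(lia) Hk Hlarge Hj).
Qed.

End Bounded.

End Slack.

Theorem ratio_cvg_of_large_terms (M : nat) :
  (exists Y M1, forall n, (M1 <= n)%nat -> l n / E n <= Y) ->
  (exists q : R, is_lim_seq (fun n => E n / E (S n)) q) ->
  (forall N, (M <= N)%nat -> exists k, (1 <= k)%nat /\ large_term N k) ->
  exists L : R, is_lim_seq (fun n => l n / E n) L.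
Proof.
  intros HY Hq Hlarge.
  destruct (Rpower_sublinear a (eps / (8 * (1 + eps))) Ha) as [X1 [HX1 Hsub1]].
  { apply Rdiv_lt_0_compat; lra. }
  assert (Hsub : forall x, 0 < x -> 2 * Rpower x a <= eps / (4 * (1 + eps)) * x + 2 * X1).
  { intros x Hx. specialize (Hsub1 x Hx).
    replace (eps / (4 * (1 + eps))) with (2 * (eps / (8 * (1 + eps)))) by (field; lra). lra. }
  set (X0 := 2 * X1). assert (HX0 : 0 <= X0) by (unfold X0; lra).
  destruct (mean_ratio_bounded HY) as [B [M2 [HM2 HB]]].
  set (M3 := Nat.max M M2).
  assert (HB0 : 0 <= B) by (pose proof (mean_ratio_nonneg M2 HM2); pose proof (HB M2 (le_n _)); lra).
  pose proof Cl_pos as HCl.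
  destruct (jump_dichotomy mean_ratio (fun n => l n / E n) th (jump_const X0 B) (Cl * (1 + Ch + G + X0)) M3)
    as [Hs | Hy0].
  - exact Hth.
  - unfold jump_const. pose proof (Rpower_pos (Cl * (B + Ch + G + X0)) a). lra.
  - apply Rmult_le_pos; lra.
  - intros n Hn. apply mean_ratio_nonneg. lia.
  - intros n Hn. apply Rdiv_le_0_compat; [apply l_nonneg | apply HE_pos]; lia.
  - intros N HN. destruct (Hlarge N ltac:(lia)) as [k [Hk Hlarge_Nk]].
    exists k. apply (large_term_jump X0 HX0 Hsub B M2 HM2 HB); [lia | exact Hk | exact Hlarge_Nk].
  - exact (ratio_cvg_of_mean_ratio_cvg Hq Hs).
  - exists 0. exact Hy0.
Qed.

Corollary frequently_small_terms :
  (exists Y M1, forall n, (M1 <= n)%nat -> l n / E n <= Y) ->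
  (exists q : R, is_lim_seq (fun n => E n / E (S n)) q) ->
  ~ (exists L : R, is_lim_seq (fun n => l n / E n) L) ->
  forall N0, exists N, (N0 <= N)%nat /\ forall k, (1 <= k)%nat ->
    log_weight N + G + (1 + eps / 2) * ln (INR k + 1) <= l (N + k)%nat - 2 * Rpower (l (N + k)%nat) a.
Proof.
  intros HY Hq Hdiv N0. apply NNPP. intros Hno. apply Hdiv.
  apply (ratio_cvg_of_large_terms N0 HY Hq). intros N HN. apply NNPP. intros Hnk. apply Hno.
  exists N. split; [exact HN |]. intros k Hk. apply Rnot_lt_le. intros Hlt. apply Hnk.
  exists k. split; [exact Hk | exact Hlt].
Qed.

End LargeTerms.

(** * The exponents [Eexp] *)

Lemma Dprod_S d n : Dprod d (S n) = Dprod d n * INR (d (S n)).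
Proof. reflexivity. Qed.

Lemma Dprod_Dnat d n : Dprod d n = INR (Dnat d n).
Proof.
  induction n as [| n IH]; [reflexivity |].
  rewrite Dprod_S. simpl Dnat. rewrite mult_INR, IH. reflexivity.
Qed.

Definition theta (c : R) : R := Rpower 2 (c - 1).

Lemma theta_bounds c : 0 <= c < 1 -> / 2 <= theta c < 1.
Proof.
  intros Hc. unfold theta. split.
  - replace (/ 2) with (Rpower 2 (- (1))) by (rewrite Rpower_Ropp, Rpower_1; lra).
    apply Rle_Rpower; lra.
  - apply Rlt_le_trans with (Rpower 2 0); [apply Rpower_lt; lra | rewrite Rpower_O; lra].
Qed.

Lemma Rpower_le_theta_pow c x e n : c <= 1 -> e <= c - 1 -> 2 ^ n <= x ->
  Rpower x e <= theta c ^ n.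
Proof.
  intros Hc He Hx. pose proof (pow_lt 2 n ltac:(lra)) as H2n.
  eapply Rle_trans; [apply Rpower_le_nonpos; [lra | exact H2n | exact Hx] |].
  unfold theta. rewrite <- (Rpower_pow n (Rpower 2 (c - 1))) by apply Rpower_pos.
  rewrite <- (Rpower_pow n 2), !Rpower_mult by lra.
  apply Rle_Rpower; [lra |]. pose proof (pos_INR n). nra.
Qed.

Section Exponents.

Variables (D K : nat) (d : nat -> nat).
Hypothesis HD : (1 <= D)%nat.
Hypothesis HK : (1 <= K)%nat.
Hypothesis Hd : forall n, (1 <= n)%nat -> (1 <= d n)%nat.

Lemma INR_d_ge1 n : (1 <= n)%nat -> 1 <= INR (d n).
Proof. intros Hn. apply (le_INR 1), Hd, Hn. Qed.

Lemma Dprod_ge1 n : 1 <= Dprod d n.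
Proof.
  induction n as [| n IH]; [unfold Dprod; simpl; lra |].
  rewrite Dprod_S. pose proof (INR_d_ge1 (S n) ltac:(lia)). nra.
Qed.

Definition Pfactor (n : nat) : R := INR K * Dprod d n + INR (d n).

Lemma Pfactor_ge n : (1 <= n)%nat -> 1 + Dprod d n <= Pfactor n.
Proof.
  intros Hn. unfold Pfactor. pose proof (INR_d_ge1 n Hn). pose proof (Dprod_ge1 n).
  assert (1 <= INR K) by (apply (le_INR 1); lia). nra.
Qed.

Lemma Pprod_S n : (1 <= n)%nat -> Pprod K d (S n) = Pprod K d n * Pfactor n.
Proof.
  intros Hn. unfold Pprod. replace (S n - 1)%nat with (S (n - 1)) by lia.
  simpl prod1. replace (S (n - 1)) with n by lia. reflexivity.
Qed.

Lemma Pprod_ge_pow2 n : (1 <= n)%nat -> 2 ^ (n - 1) <= Pprod K d n.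
Proof.
  induction n as [| n IH]; intros Hn; [lia |].
  destruct (Nat.eq_dec n 0) as [-> | Hn0]; [unfold Pprod; simpl; lra |].
  rewrite Pprod_S by lia. replace (S n - 1)%nat with (S (n - 1)) by lia. simpl pow.
  pose proof (IH ltac:(lia)). pose proof (Pfactor_ge n ltac:(lia)). pose proof (Dprod_ge1 n).
  pose proof (pow_lt 2 (n - 1) ltac:(lra)). nra.
Qed.

Lemma INR_D_ge1 : 1 <= INR D.
Proof. apply (le_INR 1), HD. Qed.

Lemma Eexp_S n : (1 <= n)%nat -> Eexp D K d (S n) = Eexp D K d n * (INR D * Pfactor n).
Proof. intros Hn. unfold Eexp. rewrite Pprod_S by exact Hn. simpl pow. ring. Qed.

Lemma Eexp_ge_pow2 n : (1 <= n)%nat -> 2 ^ (n - 1) <= Eexp D K d n.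
Proof.
  intros Hn. unfold Eexp. pose proof (Pprod_ge_pow2 n Hn).
  pose proof (pow_R1_Rle (INR D) n INR_D_ge1). pose proof (pow_lt 2 (n - 1) ltac:(lra)). nra.
Qed.

Lemma Eexp_pos n : (1 <= n)%nat -> 0 < Eexp D K d n.
Proof. intros Hn. pose proof (Eexp_ge_pow2 n Hn). pose proof (pow_lt 2 (n - 1) ltac:(lra)). lra. Qed.

Lemma Eexp_ratio n : (1 <= n)%nat -> Eexp D K d n / Eexp D K d (S n) = / (INR D * Pfactor n).
Proof.
  intros Hn. rewrite Eexp_S by exact Hn. pose proof (Eexp_pos n Hn).
  pose proof (Pfactor_ge n Hn). pose proof (Dprod_ge1 n). pose proof INR_D_ge1.
  field. split; lra.
Qed.

Lemma Dprod_cvg_infty : (forall M0, exists n, (M0 <= n)%nat /\ (2 <= d n)%nat) ->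
  is_lim_seq (Dprod d) p_infty.
Proof.
  intros Hinf.
  assert (Hgrow : forall t, exists N, forall n, (N <= n)%nat -> INR t <= Dprod d n).
  { induction t as [| t [N HN]].
    - exists O. intros n _. pose proof (Dprod_ge1 n). simpl. lra.
    - destruct (Hinf (S N)) as [n0 [Hn0 Hd0]]. exists n0. intros n Hn.
      assert (Hmono : forall m, (n0 <= m)%nat -> Dprod d n0 <= Dprod d m).
      { induction 1 as [| m Hm IH]; [lra |]. rewrite Dprod_S.
        pose proof (INR_d_ge1 (S m) ltac:(lia)). pose proof (Dprod_ge1 m). nra. }
      replace n0 with (S (n0 - 1)) in Hmono, Hd0 by lia. rewrite Dprod_S in Hmono.
      pose proof (HN (n0 - 1)%nat ltac:(lia)). pose proof (Dprod_ge1 (n0 - 1)).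
      assert (2 <= INR (d (S (n0 - 1)))) by (apply (le_INR 2); lia).
      pose proof (Hmono n ltac:(lia)). rewrite S_INR. nra. }
  apply is_lim_seq_spec. intros B. destruct (INR_unbounded B) as [t Ht].
  destruct (Hgrow t) as [N HN]. exists N. intros n Hn. specialize (HN n Hn). lra.
Qed.

Lemma Eexp_ratio_cvg : exists q : R, is_lim_seq (fun n => Eexp D K d n / Eexp D K d (S n)) q.
Proof.
  destruct (classic (exists M0, forall n, (M0 <= n)%nat -> d n = 1%nat)) as [[M0 HM0] | Hnot].
  - set (M1 := Nat.max M0 1).
    assert (Hconst : forall n, (M1 <= n)%nat -> Dprod d n = Dprod d M1).
    { induction 1 as [| n Hn IH]; [reflexivity |].
      rewrite Dprod_S, IH, HM0 by lia. simpl. ring. }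
    exists (/ (INR D * (INR K * Dprod d M1 + 1))).
    apply is_lim_seq_ext_loc with (u := fun _ => / (INR D * (INR K * Dprod d M1 + 1)));
      [| apply is_lim_seq_const].
    exists M1. intros n Hn. rewrite Eexp_ratio by lia. unfold Pfactor.
    rewrite (Hconst n), (HM0 n) by lia. reflexivity.
  - exists 0. replace (Finite 0) with (Rbar_inv p_infty) by reflexivity.
    apply is_lim_seq_ext_loc with (u := fun n => / (INR D * Pfactor n));
      [exists 1%nat; intros n Hn; symmetry; apply Eexp_ratio; lia |].
    apply is_lim_seq_inv; [| discriminate].
    apply (is_lim_seq_le_p_loc (Dprod d)).
    + exists 1%nat. intros n Hn. pose proof (Pfactor_ge n Hn). pose proof INR_D_ge1.
      pose proof (Dprod_ge1 n). nra.
    + apply Dprod_cvg_infty. intros M0. apply NNPP. intros Hno. apply Hnot.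
      exists (Nat.max M0 1). intros n Hn. pose proof (Hd n ltac:(lia)).
      destruct (Nat.eq_dec (d n) 1) as [Heq | Hne]; [exact Heq |].
      exfalso. apply Hno. exists n. split; lia.
Qed.

Definition rate (n : nat) : R := INR D * INR K * Dprod d n.

Lemma rate_bounds n : (1 <= n)%nat -> 1 <= rate n <= rate (S n).
Proof.
  intros Hn. unfold rate. rewrite Dprod_S. pose proof (Dprod_ge1 n).
  pose proof (INR_d_ge1 (S n) ltac:(lia)). pose proof INR_D_ge1.
  assert (1 <= INR K) by (apply (le_INR 1); lia).
  assert (1 <= INR D * INR K) by nra. split; [nra |].
  assert (0 <= INR D * INR K * Dprod d n) by nra. nra.
Qed.

Lemma Eexp_growth n : (1 <= n)%nat -> (1 + rate n) * Eexp D K d n <= Eexp D K d (S n).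
Proof.
  intros Hn. rewrite Eexp_S by exact Hn. unfold rate, Pfactor.
  pose proof (Eexp_pos n Hn). pose proof (INR_d_ge1 n Hn). pose proof INR_D_ge1.
  assert (1 <= INR D * INR (d n)) by nra. nra.
Qed.

Variable c : R.
Hypothesis Hc : 0 <= c < 1.

Lemma Eexp_S_pow_le e n : (1 <= n)%nat -> e <= c - 1 -> Rpower (Eexp D K d (S n)) e <= theta c ^ n.
Proof.
  intros Hn He. apply Rpower_le_theta_pow; [lra | exact He |].
  replace n with (S n - 1)%nat at 1 by lia. apply Eexp_ge_pow2. lia.
Qed.

Lemma Eexp_S_inv_le n : (1 <= n)%nat -> / Eexp D K d (S n) <= theta c ^ n.
Proof.
  intros Hn. rewrite <- (Rpower_1 (Eexp D K d (S n))) by (apply Eexp_pos; lia).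
  rewrite <- Rpower_Ropp. apply Eexp_S_pow_le; [exact Hn | lra].
Qed.

Definition cexp (n : nat) : R :=
  Rpower (INR D) (c * INR n) * prod1 (fun i => rpow (INR K * Dprod d i + INR (d i)) c) (n - 1).

Definition cexp_weight (n : nat) : R := INR D * Dprod d n * (cexp n * ln 2).

(* [cexp n = D^(cn) P_n^c] with [P_n >= 2^(n-1)], so [cexp n <= D^n P_n 2 theta^n]. *)
Lemma cexp_weight_bounds n : (1 <= n)%nat ->
  0 <= cexp_weight n <= 2 * theta c ^ n * Eexp D K d (S n).
Proof.
  intros Hn. set (P := Pprod K d n).
  pose proof (Pprod_ge_pow2 n Hn) as HP. fold P in HP.
  pose proof (pow_lt 2 (n - 1) ltac:(lra)). pose proof INR_D_ge1.
  destruct (theta_bounds c Hc) as [Hth1 Hth2].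
  assert (Hcexp : cexp n = Rpower (INR D) (c * INR n) * Rpower P c).
  { unfold cexp. f_equal. apply (prod1_rpow Pfactor). intros i Hi.
    pose proof (Pfactor_ge i Hi). pose proof (Dprod_ge1 i). lra. }
  assert (HDc : Rpower (INR D) (c * INR n) <= INR D ^ n).
  { rewrite <- Rpower_pow by lra. apply Rle_Rpower; [lra |]. pose proof (pos_INR n). nra. }
  assert (HPc : Rpower P c <= 2 * theta c ^ n * P).
  { rewrite (Rpower_split_1 P c) by lra. apply Rmult_le_compat_r; [lra |].
    pose proof (Rpower_le_theta_pow c P (c - 1) (n - 1) ltac:(lra) ltac:(lra) HP).
    replace (theta c ^ n) with (theta c * theta c ^ (n - 1))
      by (replace n with (S (n - 1)) at 2 by lia; reflexivity).
    pose proof (pow_lt (theta c) (n - 1) ltac:(lra)). nra. }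
  assert (Hcexp_le : 0 <= cexp n <= INR D ^ n * (2 * theta c ^ n * P)).
  { rewrite Hcexp. pose proof (Rpower_pos (INR D) (c * INR n)). pose proof (Rpower_pos P c).
    split; [nra |]. apply Rmult_le_compat; lra. }
  unfold cexp_weight. rewrite Eexp_S by exact Hn. unfold Eexp. fold P.
  pose proof ln2_bounds. pose proof (Pfactor_ge n Hn). pose proof (Dprod_ge1 n).
  assert (Hln : cexp n * ln 2 <= INR D ^ n * (2 * theta c ^ n * P)) by nra.
  assert (0 <= cexp n * ln 2) by nra.
  assert (INR D * Dprod d n <= INR D * Pfactor n) by nra.
  split; [apply Rmult_le_pos; [nra | lra] |].
  replace (2 * theta c ^ n * (INR D ^ n * P * (INR D * Pfactor n)))
    with (INR D * Pfactor n * (INR D ^ n * (2 * theta c ^ n * P))) by ring.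
  apply Rmult_le_compat; nra.
Qed.

End Exponents.

(** * The tails of [gamma] *)

Lemma Cmod_csum1_scal_le (beta : nat -> Z) (t : nat -> C) (K : nat) (w : R) :
  (forall j, (1 <= j <= K)%nat -> Cmod (t j) <= w) ->
  Cmod (csum1 (fun j => Cmult (RtoC (IZR (beta j))) (t j)) K) <= sum1 (fun j => Rabs (IZR (beta j))) K * w.
Proof.
  intros Ht. rewrite <- sum1_mult_r. apply Cmod_csum1_le. intros j Hj.
  rewrite Cmod_mult, Cmod_R. apply Rmult_le_compat_l; [apply Rabs_pos | apply Ht, Hj].
Qed.

(* [2^((log2 x)^a) = exp ((ln x)^a (ln 2)^(1-a))] and [ln 2 < 1]. *)
Lemma Rpower2_rpow_log2_le a x : 0 < a < 1 -> 1 < x ->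
  Rpower 2 (rpow (log2 x) a) <= exp (Rpower (ln x) a).
Proof.
  intros Ha Hx. pose proof (ln_pos_lt x Hx). pose proof ln2_bounds as [Hl2 Hl2'].
  assert (Hlnln2 : ln (ln 2) < 0) by (rewrite <- ln_1; apply ln_increasing; lra).
  unfold Rpower at 1. apply exp_le. unfold log2.
  rewrite rpow_pos_eq by (apply Rdiv_lt_0_compat; lra).
  unfold Rpower. rewrite ln_div by lra.
  rewrite <- (exp_ln (ln 2)) at 2 by lra. rewrite <- exp_plus. apply exp_le. nra.
Qed.

Section Alpha.

Variables (K : nat) (a eps : R) (alpha b : nat -> nat -> C).
Hypothesis Ha : 0 < a < 1.
Hypothesis Heps : 0 < eps.
Hypothesis H1 : forall n, (1 <= n)%nat -> Cmod (alpha 1%nat n) < Cmod (alpha 1%nat (S n)).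
Hypothesis H2 : forall n, (1 <= n)%nat -> Cmod (alpha 1%nat n) >= Rpower (INR n) (1 + eps).
Hypothesis H5 : forall n i, (1 <= n)%nat -> (1 < i <= K)%nat ->
  Rpower 2 (- rpow (log2 (Cmod (alpha 1%nat n))) a) < Cmod (alpha 1%nat n) / Cmod (alpha i n)
  /\ Cmod (alpha 1%nat n) / Cmod (alpha i n) < Rpower 2 (rpow (log2 (Cmod (alpha 1%nat n))) a).
Hypothesis H6 : forall n i, (1 <= n)%nat -> (1 <= i <= K)%nat ->
  Cmod (b i n) <= Rpower 2 (rpow (log2 (Cmod (alpha 1%nat n))) a).

Definition log_alpha1 (n : nat) : R := ln (Cmod (alpha 1%nat n)).

Lemma Cmod_alpha1_ge1 n : (1 <= n)%nat -> 1 <= Cmod (alpha 1%nat n).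
Proof.
  intros Hn. pose proof (H2 n Hn). assert (1 <= INR n) by (apply (le_INR 1), Hn).
  assert (1 <= Rpower (INR n) (1 + eps)).
  { rewrite <- (Rpower_O (INR n)) at 1 by lra. apply Rle_Rpower; lra. }
  lra.
Qed.

Lemma log_alpha1_ge n : (1 <= n)%nat -> (1 + eps) * ln (INR n) <= log_alpha1 n.
Proof.
  intros Hn. pose proof (H2 n Hn). assert (0 < INR n) by (apply (lt_INR 0); lia).
  unfold log_alpha1. rewrite <- (ln_exp ((1 + eps) * ln (INR n))).
  apply ln_le; [apply exp_pos | fold (Rpower (INR n) (1 + eps)); lra].
Qed.

Lemma log_alpha1_incr n : (1 <= n)%nat -> log_alpha1 n < log_alpha1 (S n).
Proof.
  intros Hn. pose proof (Cmod_alpha1_ge1 n Hn). apply ln_increasing; [lra | apply H1, Hn].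
Qed.

Lemma log_alpha1_pos n : (2 <= n)%nat -> 0 < log_alpha1 n.
Proof.
  intros Hn. pose proof (log_alpha1_ge n ltac:(lia)).
  assert (0 < ln (INR n)) by (apply ln_pos_lt; apply (lt_INR 1); lia). nra.
Qed.

(* The lower bound in (5) only serves to exclude [alpha j n = 0], where [x / 0 = 0]. *)
Lemma Cmod_alpha_inv_le n j : (1 <= n)%nat -> (1 <= j <= K)%nat -> 1 < Cmod (alpha 1%nat n) ->
  0 < Cmod (alpha j n) /\
  / Cmod (alpha j n) <= Rpower 2 (rpow (log2 (Cmod (alpha 1%nat n))) a) / Cmod (alpha 1%nat n).
Proof.
  intros Hn Hj Hx. set (x := Cmod (alpha 1%nat n)) in *. set (B := Rpower 2 (rpow (log2 x) a)).
  destruct (Nat.eq_dec j 1) as [-> | Hj1].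
  - assert (HB1 : 1 <= B).
    { unfold B. rewrite <- (Rpower_O 2) at 1 by lra. apply Rle_Rpower; [lra |].
      rewrite rpow_pos_eq by (unfold log2; apply Rdiv_lt_0_compat; [apply ln_pos_lt, Hx | apply ln2_bounds]).
      left. apply Rpower_pos. }
    change (Cmod (alpha 1%nat n)) with x. split; [lra |].
    unfold Rdiv. rewrite <- (Rmult_1_l (/ x)) at 1.
    apply Rmult_le_compat_r; [left; apply Rinv_0_lt_compat |]; lra.
  - destruct (H5 n j Hn ltac:(lia)) as [Hlo Hhi]. fold x B in Hlo, Hhi.
    assert (Haj : 0 < Cmod (alpha j n)).
    { destruct (Cmod_ge_0 (alpha j n)) as [Hpos | Hzero]; [exact Hpos |].
      rewrite <- Hzero, Rdiv_0_r in Hlo. pose proof (Rpower_pos 2 (- rpow (log2 x) a)). lra. }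
    split; [exact Haj |]. apply (Rmult_le_reg_l x); [lra |].
    replace (x * (B / x)) with B by (field; lra). unfold Rdiv in Hhi. lra.
Qed.

Lemma Cmod_div_alpha_le n j : (2 <= n)%nat -> (1 <= j <= K)%nat ->
  Cmod (Cdiv (b j n) (alpha j n)) <= exp (2 * Rpower (log_alpha1 n) a - log_alpha1 n).
Proof.
  intros Hn Hj. pose proof (log_alpha1_pos n Hn) as Hl. unfold log_alpha1 in *.
  set (x := Cmod (alpha 1%nat n)) in *.
  assert (Hx : 1 < x).
  { pose proof (Cmod_alpha1_ge1 n ltac:(lia)) as Hge. fold x in Hge.
    destruct Hge as [Hlt | Heq]; [exact Hlt |]. rewrite <- Heq, ln_1 in Hl. lra. }
  destruct (Cmod_alpha_inv_le n j ltac:(lia) Hj Hx) as [Haj Hinv]. fold x in Hinv.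
  set (B := Rpower 2 (rpow (log2 x) a)) in *.
  assert (HBe : B <= exp (Rpower (ln x) a)) by (apply Rpower2_rpow_log2_le; assumption).
  pose proof (H6 n j ltac:(lia) Hj) as Hb. fold x B in Hb.
  rewrite Cmod_div by (apply Cmod_gt_0; exact Haj).
  apply Rle_trans with (B * B * / x).
  { replace (B * B * / x) with (B * (B / x)) by (unfold Rdiv; ring). unfold Rdiv.
    apply Rmult_le_compat; [apply Cmod_ge_0 | left; apply Rinv_0_lt_compat, Haj | exact Hb | exact Hinv]. }
  replace (2 * Rpower (ln x) a - ln x) with (Rpower (ln x) a + Rpower (ln x) a + - ln x) by ring.
  rewrite !exp_plus, exp_Ropp, exp_ln by lra.
  pose proof (Rinv_0_lt_compat x ltac:(lra)). pose proof (Cmod_ge_0 (b j n)).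
  apply Rmult_le_compat_r; [lra |]. apply Rmult_le_compat; lra.
Qed.

Lemma ctail_le N W p j : (1 <= N)%nat -> 1 < p -> (1 <= j <= K)%nat ->
  (forall k, (1 <= k)%nat -> W + p * ln (INR k + 1) <= log_alpha1 (N + k) - 2 * Rpower (log_alpha1 (N + k)) a) ->
  Cmod (ctail (fun n => Cdiv (b j n) (alpha j n)) N) <= 2 * (exp (- W) * Series (zeta_term p)).
Proof.
  intros HN Hp Hj Hdom.
  set (u := fun i => Cdiv (b j (N + 1 + i)%nat) (alpha j (N + 1 + i)%nat)).
  set (w := fun i => exp (- W) * zeta_term p i).
  assert (Hw : ex_series w).
  { apply (@ex_series_scal_l R_AbsRing R_NormedModule), ex_series_zeta_term, Hp. }
  assert (Hu : forall i, Cmod (u i) <= w i).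
  { intros i. unfold u, w, zeta_term. eapply Rle_trans; [apply Cmod_div_alpha_le; [lia | exact Hj] |].
    specialize (Hdom (S i) ltac:(lia)). replace (N + S i)%nat with (N + 1 + i)%nat in Hdom by lia.
    change (Rpower (INR i + 2) (- p)) with (exp (- p * ln (INR i + 2))).
    rewrite <- exp_plus. apply exp_le. rewrite S_INR in Hdom.
    replace (INR i + 1 + 1) with (INR i + 2) in Hdom by ring. lra. }
  assert (HSw : Series w = exp (- W) * Series (zeta_term p)) by apply Series_scal_l.
  eapply Rle_trans; [apply Cmod_le_Re_Im |]. unfold ctail.
  change (Re (?x, _)) with x. change (Im (_, ?y)) with y. rewrite <- HSw.
  assert (Rabs (Series (fun k => Re (u k))) <= Series w).
  { apply Series_Rabs_le; [exact Hw |]. intros i. eapply Rle_trans; [apply re_le_Cmod | apply Hu]. }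
  assert (Rabs (Series (fun k => Im (u k))) <= Series w).
  { apply Series_Rabs_le; [exact Hw |]. intros i. eapply Rle_trans; [apply im_le_Cmod | apply Hu]. }
  unfold u in *. lra.
Qed.

End Alpha.

Section Approximation.

Variables (D K : nat) (A1 A2 a eps : R) (d : nat -> nat) (alpha b : nat -> nat -> C)
  (beta : nat -> Z) (c : R).
Hypothesis HD : (1 <= D)%nat.
Hypothesis HK : (1 <= K)%nat.
Hypothesis Ha : 0 < a < 1.
Hypothesis Heps : 0 < eps.
Hypothesis HA12 : A1 < A2.
Hypothesis Hd : forall n, (1 <= n)%nat -> (1 <= d n)%nat.
Hypothesis H1 : forall n, (1 <= n)%nat -> Cmod (alpha 1%nat n) < Cmod (alpha 1%nat (S n)).
Hypothesis H2 : forall n, (1 <= n)%nat -> Cmod (alpha 1%nat n) >= Rpower (INR n) (1 + eps).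
Hypothesis H3 : LimInf_seq (fun n => rpow (Cmod (alpha 1%nat n)) (/ Eexp D K d n)) = Finite A1.
Hypothesis H4 : LimSup_seq (fun n => rpow (Cmod (alpha 1%nat n)) (/ Eexp D K d n)) = Finite A2.
Hypothesis H5 : forall n i, (1 <= n)%nat -> (1 < i <= K)%nat ->
  Rpower 2 (- rpow (log2 (Cmod (alpha 1%nat n))) a) < Cmod (alpha 1%nat n) / Cmod (alpha i n)
  /\ Cmod (alpha 1%nat n) / Cmod (alpha i n) < Rpower 2 (rpow (log2 (Cmod (alpha 1%nat n))) a).
Hypothesis H6 : forall n i, (1 <= n)%nat -> (1 <= i <= K)%nat ->
  Cmod (b i n) <= Rpower 2 (rpow (log2 (Cmod (alpha 1%nat n))) a).
Hypothesis Hac : a < c.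
Hypothesis Hc1 : c < 1.

Let l := log_alpha1 alpha.
Let E := Eexp D K d.

Lemma rpow_alpha1_eq n : (1 <= n)%nat ->
  rpow (Cmod (alpha 1%nat n)) (/ E n) = exp (l n / E n).
Proof.
  intros Hn. pose proof (Cmod_alpha1_ge1 eps alpha Heps H2 n Hn).
  rewrite rpow_pos_eq by lra. unfold Rpower, l, log_alpha1, Rdiv. f_equal. ring.
Qed.

Lemma log_ratio_bounded : exists Y M1, forall n, (M1 <= n)%nat -> l n / E n <= Y.
Proof.
  set (x := fun n => rpow (Cmod (alpha 1%nat n)) (/ E n)).
  assert (HLS : is_LimSup_seq x A2).
  { destruct (ex_LimSup_seq x) as [ls Hls].
    replace (Finite A2) with ls by (rewrite <- H4; symmetry; exact (is_LimSup_seq_unique _ _ Hls)).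
    exact Hls. }
  destruct (HLS (mkposreal 1 Rlt_0_1)) as [_ [N HN]]. simpl in HN.
  exists (ln (A2 + 1)), (Nat.max N 1). intros n Hn.
  specialize (HN n ltac:(lia)). unfold x in HN. rewrite rpow_alpha1_eq in HN by lia.
  rewrite <- (ln_exp (l n / E n)). left. apply ln_increasing; [apply exp_pos | exact HN].
Qed.

Lemma log_ratio_not_cvg : ~ exists L : R, is_lim_seq (fun n => l n / E n) L.
Proof.
  intros [L HL].
  set (x := fun n => rpow (Cmod (alpha 1%nat n)) (/ E n)).
  assert (Hx : is_lim_seq x (exp L)).
  { apply is_lim_seq_ext_loc with (u := fun n => exp (l n / E n)).
    - exists 1%nat. intros n Hn. symmetry. apply rpow_alpha1_eq, Hn.
    - apply is_lim_seq_continuous; [apply derivable_continuous_pt, derivable_exp | exact HL]. }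
  pose proof (is_LimInf_seq_unique _ _ (is_lim_LimInf_seq _ _ Hx)) as HI.
  pose proof (is_LimSup_seq_unique _ _ (is_lim_LimSup_seq _ _ Hx)) as HS.
  unfold x, E in HI, HS. rewrite H3 in HI. rewrite H4 in HS.
  injection HI. injection HS. lra.
Qed.

Definition weight (N : nat) : R :=
  (Rpower 2 (cexp D K d c N) * prod1 (fun n => Cmod (alpha 1%nat n) ^ K) N) ^ (D * Dnat d N).

Lemma weight_eq N : weight N = exp (log_weight l (rate D K d) (cexp_weight D K d c) N).
Proof.
  assert (Hpos : forall n, (1 <= n)%nat -> 0 < Cmod (alpha 1%nat n) ^ K).
  { intros n Hn. apply pow_lt. pose proof (Cmod_alpha1_ge1 eps alpha Heps H2 n Hn). lra. }
  pose proof (prod1_pos _ N Hpos) as Hprod.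
  unfold weight. rewrite <- Rpower_pow by (apply Rmult_lt_0_compat; [apply Rpower_pos | exact Hprod]).
  unfold Rpower at 1. f_equal.
  rewrite ln_mult by (try apply Rpower_pos; exact Hprod). unfold Rpower at 1. rewrite ln_exp.
  rewrite ln_prod1 by exact Hpos.
  assert (Hsum : sum1 (fun n => ln (Cmod (alpha 1%nat n) ^ K)) N = sum1 l N * INR K).
  { clear Hprod. rewrite <- sum1_mult_r. induction N as [| N IH]; simpl; [reflexivity |].
    rewrite IH, ln_pow; [unfold l, log_alpha1; ring |].
    pose proof (Cmod_alpha1_ge1 eps alpha Heps H2 (S N) ltac:(lia)). lra. }
  rewrite Hsum, mult_INR, <- Dprod_Dnat. unfold log_weight, rate, cexp_weight. ring.
Qed.

Lemma frequently_small_terms_alpha G : 0 <= G -> forall N0, exists N, (N0 <= N)%nat /\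
  forall k, (1 <= k)%nat ->
    log_weight l (rate D K d) (cexp_weight D K d c) N + G + (1 + eps / 2) * ln (INR k + 1)
      <= l (N + k)%nat - 2 * Rpower (l (N + k)%nat) a.
Proof.
  intros HG.
  assert (Hc0 : 0 <= c < 1) by lra.
  apply (frequently_small_terms l E (rate D K d) (cexp_weight D K d c) a eps (theta c) 2 G);
    try assumption; try lra.
  - pose proof (theta_bounds c Hc0). lra.
  - intros n Hn. apply Eexp_pos; assumption.
  - intros n Hn. apply Eexp_growth; assumption.
  - intros n Hn. apply rate_bounds; assumption.
  - intros n Hn. apply cexp_weight_bounds; assumption.
  - intros n Hn. apply Eexp_S_inv_le; assumption.
  - intros n Hn. apply Eexp_S_pow_le; [assumption .. | lra].
  - intros n Hn. apply log_alpha1_incr with (eps := eps); assumption.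
  - intros n Hn. apply log_alpha1_ge; assumption.
  - exact log_ratio_bounded.
  - apply Eexp_ratio_cvg; assumption.
  - exact log_ratio_not_cvg.
Qed.

Definition gamma_sum (N : nat) : C :=
  csum1 (fun j => Cmult (RtoC (IZR (beta j))) (ctail (fun n => Cdiv (b j n) (alpha j n)) N)) K.

Definition gamma_const : R :=
  sum1 (fun j => Rabs (IZR (beta j))) K * (2 * Series (zeta_term (1 + eps / 2))).

Lemma gamma_const_nonneg : 0 <= gamma_const.
Proof.
  unfold gamma_const. apply Rmult_le_pos; [apply sum1_nonneg; intros; apply Rabs_pos |].
  assert (0 <= Series (zeta_term (1 + eps / 2))).
  { apply Series_nonneg; [apply ex_series_zeta_term; lra |]. intros i. left. apply Rpower_pos. }
  lra.
Qed.

Lemma weighted_gamma_le G N : (1 <= N)%nat ->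
  (forall k, (1 <= k)%nat ->
    log_weight l (rate D K d) (cexp_weight D K d c) N + G + (1 + eps / 2) * ln (INR k + 1)
      <= l (N + k)%nat - 2 * Rpower (l (N + k)%nat) a) ->
  Cmod (gamma_sum N) * weight N <= gamma_const * exp (- G).
Proof.
  intros HN Hdom.
  set (Phi := log_weight l (rate D K d) (cexp_weight D K d c) N).
  set (Bsum := sum1 (fun j => Rabs (IZR (beta j))) K). set (Z := Series (zeta_term (1 + eps / 2))).
  assert (Hgamma : Cmod (gamma_sum N) <= Bsum * (2 * (exp (- (Phi + G)) * Z))).
  { apply Cmod_csum1_scal_le. intros j Hj. apply (ctail_le K a eps alpha b); try assumption; try lra. }
  rewrite weight_eq. fold Phi.
  replace (gamma_const * exp (- G)) with (Bsum * (2 * (exp (- (Phi + G)) * Z)) * exp Phi)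
    by (unfold gamma_const; fold Bsum Z; replace (- G) with (- (Phi + G) + Phi) by ring; rewrite exp_plus; ring).
  apply Rmult_le_compat_r; [left; apply exp_pos | exact Hgamma].
Qed.

End Approximation.

Theorem lemma3p2
  (D K : nat) (A1 A2 a eps : R)
  (d : nat -> nat) (alpha b : nat -> nat -> C) (beta : nat -> Z) (c : R)
  (HD : (1 <= D)%nat) (HK : (1 <= K)%nat)
  (HA1 : 0 < A1) (HA2 : 0 < A2) (Ha : 0 < a) (Heps : 0 < eps)
  (Hord : a < 1 /\ 1 <= A1 /\ A1 < A2)
  (Hd : forall n, (1 <= n)%nat -> (1 <= d n)%nat)
  (H1 : forall n, (1 <= n)%nat -> Cmod (alpha 1%nat n) < Cmod (alpha 1%nat (S n)))
  (H2 : forall n, (1 <= n)%nat -> Cmod (alpha 1%nat n) >= Rpower (INR n) (1 + eps))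
  (H3 : LimInf_seq (fun n => rpow (Cmod (alpha 1%nat n)) (/ Eexp D K d n)) = Finite A1)
  (H4 : LimSup_seq (fun n => rpow (Cmod (alpha 1%nat n)) (/ Eexp D K d n)) = Finite A2)
  (H5 : forall n i, (1 <= n)%nat -> (1 < i <= K)%nat ->
     Rpower 2 (- rpow (log2 (Cmod (alpha 1%nat n))) a)
       < Cmod (alpha 1%nat n) / Cmod (alpha i n)
     /\ Cmod (alpha 1%nat n) / Cmod (alpha i n)
       < Rpower 2 (rpow (log2 (Cmod (alpha 1%nat n))) a))
  (H6 : forall n i, (1 <= n)%nat -> (1 <= i <= K)%nat ->
     Cmod (b i n) <= Rpower 2 (rpow (log2 (Cmod (alpha 1%nat n))) a))
  (Hbeta : exists j, (1 <= j <= K)%nat /\ beta j <> 0%Z)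
  (Hc : a < c /\ c < 1) :
  let gamma (N : nat) : C :=
    csum1 (fun j => Cmult (RtoC (IZR (beta j)))
                          (ctail (fun n => Cdiv (b j n) (alpha j n)) N)) K in
  LimInf_seq (fun N =>
    Cmod (gamma N) *
    (Rpower 2 (Rpower (INR D) (c * INR N) * prod1 (fun i => rpow (INR K * Dprod d i + INR (d i)) c) (N - 1))
     * prod1 (fun n => Cmod (alpha 1%nat n) ^ K) N)
    ^ (D * Dnat d N)%nat) = Finite 0.
Proof.
  intros gamma.
  destruct Hord as [Ha1 [_ HA12]]. destruct Hc as [Hac Hc1].
  assert (Ha' : 0 < a < 1) by lra.
  change (LimInf_seq (fun N => Cmod (gamma_sum K alpha b beta N) * weight D K d alpha c N) = 0).
  apply is_LimInf_seq_unique. intros e. split.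
  - intros N0.
    destruct (exp_neg_small (gamma_const K eps beta) e (gamma_const_nonneg K eps beta Heps) (cond_pos e))
      as [G [HG Hsmall]].
    destruct (frequently_small_terms_alpha D K A1 A2 a eps d alpha c HD HK Ha' Heps HA12 Hd H1 H2 H3 H4
                Hac Hc1 G HG (Nat.max N0 1)) as [N [HN Hdom]].
    exists N. split; [lia |].
    pose proof (weighted_gamma_le D K a eps d alpha b beta c HD HK Ha' Heps H2 H5 H6 G N ltac:(lia) Hdom).
    simpl. lra.
  - exists O. intros n _. simpl.
    pose proof (cond_pos e). pose proof (Cmod_ge_0 (gamma_sum K alpha b beta n)).
    rewrite (weight_eq D K eps d alpha c HD HK Heps H2).
    pose proof (exp_pos (log_weight (log_alpha1 alpha) (rate D K d) (cexp_weight D K d c) n)).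
    nra.
Qed.
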